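(* Let $g>0$, $H>0$, $l\in(0,1)$, $u_1,u_2\in\mathbb{R}$, and let $u\in\{u_1,u_2\}$. Define $$M=\begin{pmatrix}1&0&0\\-u&1&0\\-u&0&1\end{pmatrix},\qquad A=\begin{pmatrix}0&l&1-l\\ gH-u_1^2&2u_1-u&0\\ gH-u_2^2&0&2u_2-u\end{pmatrix}.$$ Then $M^{-1}A$ has three distinct real eigenvalues (equivalently, $x\mapsto\det(A-xM)$ has three distinct real roots). Consequently the two-layer system below, written in the quasilinear form $M(X)\partial_t X+A(X)\partial_x X=S(X)$ with $X=(H,q_1,q_2)^T$, $q_i=Hu_i$, is strictly hyperbolic whenever $H>0$.
   Context: The two-layer multilayer Saint-Venant system with mass exchange (layer thicknesses $h_1=lH$, $h_2=(1-l)H$, $l\in(0,1)$ fixed) reads $$\partial_t H+l\,\partial_x(Hu_1)+(1-l)\,\partial_x(Hu_2)=0,$$ $$\partial_t(Hu_1)+\partial_x(Hu_1^2)+\tfrac g2\partial_x(H^2)=-gH\partial_x z_b+u\big(\partial_t H+\partial_x(Hu_1)\big)-H\partial_x p^a+\tfrac{2\nu}{lH}(u_2-u_1)-\tilde\kappa\,u_1,$$ $$\partial_t(Hu_2)+\partial_x(Hu_2^2)+\tfrac g2\partial_x(H^2)=-gH\partial_x z_b+u\big(\partial_t H+\partial_x(Hu_2)\big)-\tfrac{2\nu}{(1-l)H}(u_2-u_1)-H\partial_x p^a,$$ where $H$ is the total water height, $u_1,u_2$ the layer velocities, $z_b$ the bottom, $p^a$ the atmospheric pressure, $\nu,\tilde\kappa\ge0$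 viscosity and friction coefficients, and $u=u_{3/2}$ is the interface velocity, which is taken equal to $u_1$ or $u_2$ by upwinding according to the sign of the mass exchange between the layers. The source terms (not involving derivatives of the unknowns) form $S(X)$. *)

From HB Require Import structures.
From mathcomp Require Import all_boot all_order all_algebra.
From mathcomp Require Import reals.
Set Implicit Arguments. Unset Strict Implicit. Unset Printing Implicit Defensive.
Import Order.TTheory GRing.Theory Num.Theory.
Local Open Scope ring_scope.

Definition mx3 (R : realType) (a11 a12 a13 a21 a22 a23 a31 a32 a33 : R) : 'M[R]_3 :=
  \matrix_(i < 3, j < 3)
    nth 0 (nth [::] [:: [:: a11; a12; a13]; [:: a21; a22; a23]; [:: a31; a32; a33]] i) j.

Definition Mmat (R : realType) (u : R) : 'M[R]_3 :=
  mx3 1 0 0 (- u) 1 0 (- u) 0 1.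

Definition Amat (R : realType) (g H l u1 u2 u : R) : 'M[R]_3 :=
  mx3 0 l (1 - l)
      (g * H - u1 ^+ 2) (2 * u1 - u) 0
      (g * H - u2 ^+ 2) 0 (2 * u2 - u).

(* Since M is invertible, the eigenvalues of M^-1 A are the roots x of
   det(xM - A).  Shifting x = u_i + s
   by the upwind velocity turns det(xM - A) into the cubic
   m s ((s - d)^2 - k) + l (s^2 - k)(s - 2d), with m, l the layer
   fractions and k = gH > 0.
   For d > 0 it takes the signs -, +, -, + at -sqrt k, 0, a point of
   [0, 2d + 2 sqrt k] and 2d + 2 sqrt k, which gives three roots by the
   intermediate value theorem; d < 0 follows by the symmetry s -> -s, and for
   d = 0 the roots are -sqrt k, 0, sqrt k. *)
From HB Require Import structures.
From mathcomp Require Import all_boot all_order all_algebra.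
From mathcomp Require Import reals polyrcf ring lra.
Set Implicit Arguments. Unset Strict Implicit. Unset Printing Implicit Defensive.
Import Order.TTheory GRing.Theory Num.Theory.
Local Open Scope ring_scope.

Lemma eigenvalue_pencil (F : fieldType) (n : nat) (M A : 'M[F]_n) (x : F) :
  M \in unitmx -> \det (x *: M - A) = 0 -> eigenvalue (invmx M *m A) x.
Proof.
move=> Munit det0; set B := invmx M *m A.
have pencilE : x *: M - A = M *m (x%:M - B).
  by rewrite mulmxBr mul_mx_scalar /B mulmxA mulmxV // mul1mx.
have /det0P[v v0 /eqP] : \det (x%:M - B) == 0.
  move: det0 Munit; rewrite pencilE det_mulmx unitmxE => /eqP.
  by rewrite mulf_eq0 => /orP[/eqP-> /[!unitr0] | ].
rewrite mulmxBr mul_mx_scalar subr_eq0 => /eqP vB.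
by apply/eigenvalueP; exists v.
Qed.

Section ThreeRoots.
Variable R : rcfType.

Lemma three_roots_of_sign_changes (p : {poly R}) (t1 t2 t3 t4 : R) :
  t1 <= t2 -> t2 <= t3 -> t3 <= t4 ->
  p.[t1] * p.[t2] < 0 -> p.[t2] * p.[t3] < 0 -> p.[t3] * p.[t4] < 0 ->
  exists a b c, [/\ a < b, b < c, root p a, root p b & root p c].
Proof.
move=> le12 le23 le34 s12 s23 s34.
have [a] := poly_ivtoo le12 s12; rewrite in_itv /= => /andP[_ a_lt2] pa.
have [b] := poly_ivtoo le23 s23; rewrite in_itv /= => /andP[b_gt2 b_lt3] pb.
have [c] := poly_ivtoo le34 s34; rewrite in_itv /= => /andP[c_gt3 _] pc.
by exists a, b, c; split; rewrite // (lt_trans a_lt2, lt_trans b_lt3).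
Qed.

(* det(xM - A) at x = u_i + s, with d the velocity jump to the other layer. *)
Definition layer_cubic (m l d k : R) : {poly R} :=
  m *: ('X * (('X - d%:P) ^+ 2 - k%:P)) + l *: (('X ^+ 2 - k%:P) * ('X - (2 * d)%:P)).

Lemma horner_layer_cubic (m l d k s : R) :
  (layer_cubic m l d k).[s] = m * s * ((s - d) ^+ 2 - k) + l * (s ^+ 2 - k) * (s - 2 * d).
Proof. by rewrite /layer_cubic !hornerE. Qed.

Lemma layer_cubic_oppE (m l d k s : R) :
  (layer_cubic m l (- d) k).[- s] = - (layer_cubic m l d k).[s].
Proof. by rewrite !horner_layer_cubic; ring. Qed.

Lemma layer_cubic_lt0_sqrt (m l d r : R) : 0 < m -> 0 < d -> 0 < r ->
  (layer_cubic m l d (r ^+ 2)).[- r] < 0.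
Proof.
move=> m_gt0 d_gt0 r_gt0.
rewrite horner_layer_cubic.
have -> : m * - r * ((- r - d) ^+ 2 - r ^+ 2) + l * ((- r) ^+ 2 - r ^+ 2) * (- r - 2 * d)
  = - (m * r * d * (d + 2 * r)) by ring.
by rewrite oppr_lt0 !mulr_gt0 // addr_gt0 // mulr_gt0.
Qed.

Lemma layer_cubic_gt0_0 (m l d r : R) : 0 < l -> 0 < d -> 0 < r ->
  0 < (layer_cubic m l d (r ^+ 2)).[0].
Proof.
move=> l_gt0 d_gt0 r_gt0.
rewrite horner_layer_cubic.
have -> : m * 0 * ((0 - d) ^+ 2 - r ^+ 2) + l * (0 ^+ 2 - r ^+ 2) * (0 - 2 * d)
  = 2 * (l * r ^+ 2 * d) by ring.
by rewrite !mulr_gt0 // exprn_gt0.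
Qed.

Lemma layer_cubic_gt0_far (m l d r : R) : 0 < m -> 0 < l -> 0 < d -> 0 < r ->
  0 < (layer_cubic m l d (r ^+ 2)).[2 * d + 2 * r].
Proof.
move=> m_gt0 l_gt0 d_gt0 r_gt0.
rewrite horner_layer_cubic.
have -> : m * (2 * d + 2 * r) * ((2 * d + 2 * r - d) ^+ 2 - r ^+ 2) +
    l * ((2 * d + 2 * r) ^+ 2 - r ^+ 2) * (2 * d + 2 * r - 2 * d)
  = m * (2 * d + 2 * r) * ((d + r) * (d + 3 * r))
    + l * ((2 * d + r) * (2 * d + 3 * r)) * (2 * r) by ring.
by rewrite addr_gt0 // !mulr_gt0 //; lra.
Qed.

(* The negative middle value is taken at r if d < 2r, and at d + r otherwise. *)
Lemma layer_cubic_lt0_mid (m l d r : R) : 0 < m -> 0 < l -> 0 < d -> 0 < r ->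
  exists t, [/\ 0 <= t, t <= 2 * d + 2 * r & (layer_cubic m l d (r ^+ 2)).[t] < 0].
Proof.
move=> m_gt0 l_gt0 d_gt0 r_gt0.
have [d_lt|d_ge] := ltP d (2 * r).
  exists r; split; [lra | lra |]; rewrite horner_layer_cubic.
  have -> : m * r * ((r - d) ^+ 2 - r ^+ 2) + l * (r ^+ 2 - r ^+ 2) * (r - 2 * d)
    = - (m * r * d * (2 * r - d)) by ring.
  by rewrite oppr_lt0 !mulr_gt0 // subr_gt0.
exists (d + r); split; [lra | lra |]; rewrite horner_layer_cubic.
have -> : m * (d + r) * ((d + r - d) ^+ 2 - r ^+ 2) + l * ((d + r) ^+ 2 - r ^+ 2) * (d + r - 2 * d)
  = - (l * d * (d + 2 * r) * (d - r)) by ring.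
rewrite oppr_lt0 !mulr_gt0 //; lra.
Qed.

Lemma layer_cubic_three_roots_pos (m l d r : R) : 0 < m -> 0 < l -> 0 < d -> 0 < r ->
  exists a b c, [/\ a < b, b < c, root (layer_cubic m l d (r ^+ 2)) a,
                    root (layer_cubic m l d (r ^+ 2)) b & root (layer_cubic m l d (r ^+ 2)) c].
Proof.
move=> m_gt0 l_gt0 d_gt0 r_gt0.
have n1 := layer_cubic_lt0_sqrt l m_gt0 d_gt0 r_gt0.
have p2 := layer_cubic_gt0_0 m l_gt0 d_gt0 r_gt0.
have [t [t_ge0 t_le n3]] := layer_cubic_lt0_mid m_gt0 l_gt0 d_gt0 r_gt0.
have p4 := layer_cubic_gt0_far m_gt0 l_gt0 d_gt0 r_gt0.
apply: (three_roots_of_sign_changes (t1 := - r) (t2 := 0) (t3 := t) (t4 := 2 * d + 2 * r)) => //.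
- by rewrite oppr_le0 ltW.
- by rewrite nmulr_rlt0.
- by rewrite pmulr_rlt0.
- by rewrite nmulr_rlt0.
Qed.

Lemma layer_cubic_three_roots (m l d k : R) : 0 < m -> 0 < l -> 0 < k ->
  exists a b c, [/\ a < b, b < c, root (layer_cubic m l d k) a,
                    root (layer_cubic m l d k) b & root (layer_cubic m l d k) c].
Proof.
move=> m_gt0 l_gt0 k_gt0.
have r_gt0 : 0 < Num.sqrt k by rewrite sqrtr_gt0.
rewrite -(sqr_sqrtr (ltW k_gt0)); set r := Num.sqrt k in r_gt0 *.
have [d_lt0|d_gt0|->] := ltgtP d 0.
- have Nd_gt0 : 0 < - d by rewrite oppr_gt0.
  have [a [b [c [ab bc ra rb rc]]]] :=
    layer_cubic_three_roots_pos m_gt0 l_gt0 Nd_gt0 r_gt0.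
  exists (- c), (- b), (- a); split; rewrite ?ltrN2 // /root -[d]opprK
    layer_cubic_oppE oppr_eq0; exact.
- exact: layer_cubic_three_roots_pos.
- by exists (- r), 0, r; split; rewrite ?oppr_lt0 // /root horner_layer_cubic;
    apply/eqP; ring.
Qed.

Lemma three_eigenvalues_of_layer_cubic (B : 'M[R]_3) (m l d k c : R) :
  0 < m -> 0 < l -> 0 < k ->
  (forall s, root (layer_cubic m l d k) s -> eigenvalue B (c + s)) ->
  exists a b e : R,
    [/\ a != b, a != e, b != e & [/\ eigenvalue B a, eigenvalue B b & eigenvalue B e]].
Proof.
move=> m_gt0 l_gt0 k_gt0 eigB.
have [a [b [e [ab be ra rb re]]]] := layer_cubic_three_roots d m_gt0 l_gt0 k_gt0.
exists (c + a), (c + b), (c + e).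
have shift_neq x y : x < y -> c + x != c + y by move=> xy; rewrite lt_eqF ?ltrD2l.
split; [exact: shift_neq | exact/shift_neq/(lt_trans ab) | exact: shift_neq |].
by split; apply: eigB.
Qed.

End ThreeRoots.

Section TwoLayerMatrices.
Variable R : realType.

Lemma scale_sub_mx3 (x a11 a12 a13 a21 a22 a23 a31 a32 a33
                       b11 b12 b13 b21 b22 b23 b31 b32 b33 : R) :
  x *: mx3 a11 a12 a13 a21 a22 a23 a31 a32 a33 - mx3 b11 b12 b13 b21 b22 b23 b31 b32 b33 =
  mx3 (x * a11 - b11) (x * a12 - b12) (x * a13 - b13)
      (x * a21 - b21) (x * a22 - b22) (x * a23 - b23)
      (x * a31 - b31) (x * a32 - b32) (x * a33 - b33).
Proof.
apply/matrixP => i j; rewrite !mxE.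
by case: i => [[|[|[|i]]] Hi] //; case: j => [[|[|[|j]]] Hj].
Qed.

Lemma det_mx3 (a11 a12 a13 a21 a22 a23 a31 a32 a33 : R) :
  \det (mx3 a11 a12 a13 a21 a22 a23 a31 a32 a33) =
  a11 * (a22 * a33 - a23 * a32) - a12 * (a21 * a33 - a23 * a31)
  + a13 * (a21 * a32 - a22 * a31).
Proof.
rewrite (expand_det_row _ 0) !big_ord_recr big_ord0 /= /cofactor.
rewrite !(expand_det_row _ 0) !big_ord_recr big_ord0 /= /cofactor.
by rewrite !det_mx11 !mxE /= !big_ord0; ring.
Qed.

Lemma unitmx_Mmat (u : R) : Mmat u \in unitmx.
Proof.
by rewrite unitmxE /Mmat det_mx3 !(mulr0, mulr1, subr0, sub0r, addr0, mul0r) unitr1.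
Qed.

Lemma det_two_layer_pencil (g H l u1 u2 u x : R) :
  \det (x *: Mmat u - Amat g H l u1 u2 u) =
  x * (x - 2 * u1 + u) * (x - 2 * u2 + u)
  + l * (u1 ^+ 2 - g * H - u * x) * (x - 2 * u2 + u)
  + (1 - l) * (x - 2 * u1 + u) * (u2 ^+ 2 - g * H - u * x).
Proof. by rewrite /Mmat /Amat scale_sub_mx3 det_mx3; ring. Qed.

End TwoLayerMatrices.

Theorem mainTheorem2 (R : realType) (g H l u1 u2 u : R) :
  0 < g -> 0 < H -> 0 < l < 1 -> (u = u1 \/ u = u2) ->
  exists a b c : R,
    [/\ a != b, a != c, b != c &
      [/\ eigenvalue (invmx (Mmat u) *m Amat g H l u1 u2 u) a,
          eigenvalue (invmx (Mmat u) *m Amat g H l u1 u2 u) b &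
          eigenvalue (invmx (Mmat u) *m Amat g H l u1 u2 u) c]].
Proof.
move=> g_gt0 H_gt0 /andP[l_gt0 l_lt1] u_upwind.
have gH_gt0 : 0 < g * H by rewrite mulr_gt0.
have m_gt0 : 0 < 1 - l by rewrite subr_gt0.
case: u_upwind => ->.
- apply: (three_eigenvalues_of_layer_cubic (d := u2 - u1) (c := u1) m_gt0 l_gt0 gH_gt0).
  move=> s /rootP cubic0; apply: eigenvalue_pencil; first exact: unitmx_Mmat.
  by rewrite det_two_layer_pencil -[RHS]cubic0 horner_layer_cubic; ring.
- apply: (three_eigenvalues_of_layer_cubic (d := u1 - u2) (c := u2) l_gt0 m_gt0 gH_gt0).
  move=> s /rootP cubic0; apply: eigenvalue_pencil; first exact: unitmx_Mmat.
  by rewrite det_two_layer_pencil -[RHS]cubic0 horner_layer_cubic; ring.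
Qed.
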